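(* For every subclass $\mathbf{X}$ of the class $\mathbf{M}$ of all metric spaces, the following are equivalent: (i) $\mathbf{X}\subseteq\mathbf{Dis}$, there exists $(Y,\rho)\in\mathbf{X}$ with $\operatorname{card}(Y)\geqslant 2$, and $\mathbf{Dis}_{X_1}\subseteq\mathbf{X}$ for every $(X_1,d_1)\in\mathbf{X}$; (ii) $\mathbf{P}_{\mathbf{X}}=\mathbf{Am}$.
   Context: All metric spaces are assumed to have nonempty underlying sets; $\mathbf{M}$ is the class of all metric spaces. A metric $d$ on $X$ is discrete if there is $k\in(0,\infty)$ with $d(x,y)=k$ for all distinct $x,y\in X$; $\mathbf{Dis}$ is the class of all metric spaces with discrete metric, and for a nonempty set $X_1$, $\mathbf{Dis}_{X_1}$ is the class of all metric spaces $(X_1,d)$ with $d$ a discrete metric on $X_1$. $\mathbf{F}$ is the set of all functions $f:[0,\infty)\to[0,\infty)$; $f\in\mathbf{F}$ is amenable if $f^{-1}(0)=\{0\}$, and $\mathbf{Am}$ is the set of all amenable $f\in\mathbf{F}$. For a class $\mathbf{X}$ of metric spaces, $\mathbf{P}_{\mathbf{X}}$ denotes the set of all $f\in\mathbf{F}$ such that for every metric space $(X,d)$, if $(X,d)\in\mathbf{X}$ then $(X,f\circ d)\in\mathbf{X}$ (where $f\circ d(x,y)=f(d(x,y))$; membership requires $f\circ d$ to be a metric). *)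

From Stdlib Require Import Reals.
Open Scope R_scope.

Definition is_metric {T : Type} (d : T -> T -> R) : Prop :=
  (forall x y, 0 <= d x y) /\
  (forall x y, d x y = 0 <-> x = y) /\
  (forall x y, d x y = d y x) /\
  (forall x y z, d x z <= d x y + d y z).

(* A class of metric-space candidates: a predicate on pairs (T, d). *)
Definition MClass : Type := forall T : Type, (T -> T -> R) -> Prop.

Definition M : MClass := fun T d => inhabited T /\ is_metric d.

Definition subclass (X Y : MClass) : Prop :=
  forall (T : Type) (d : T -> T -> R), X T d -> Y T d.

Definition is_discrete_metric {T : Type} (d : T -> T -> R) : Prop :=
  is_metric d /\ exists k, 0 < k /\ forall x y, x <> y -> d x y = k.

Definition Dis : MClass := fun T d => inhabited T /\ is_discrete_metric d.

Definition Dis_on (X1 : Type) : MClass :=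
  fun T d => exists e : T = X1, inhabited T /\ is_discrete_metric d.

(* F : functions [0,oo) -> [0,oo), represented by f : R -> R whose values
   on [0,oo) are in [0,oo) (values on negatives are irrelevant). *)
Definition inF (f : R -> R) : Prop := forall t, 0 <= t -> 0 <= f t.

Definition Am (f : R -> R) : Prop :=
  inF f /\ forall t, 0 <= t -> (f t = 0 <-> t = 0).

Definition P (X : MClass) (f : R -> R) : Prop :=
  inF f /\ forall (T : Type) (d : T -> T -> R),
    X T d -> X T (fun x y => f (d x y)).

(** The functions preserving a class of discrete spaces are exactly the amenable
    ones: composing an amenable [f] with the discrete metric of constant [k]
    gives the discrete metric of constant [f k], and conversely an [f] vanishing
    at some [t > 0] collapses the discrete metric of constant [t] on a
    two-point space.  For the converse implication, each metric [d] in [X] is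
    composed with the amenable "spike" sending [d x z] to 3 and all other
    positive values to 1; the triangle inequality then forces every triangle
    of [d] to be isosceles with [d x z] as one of its repeated sides, which
    makes [d] discrete.  Rescaling by [t |-> (k / k1) t] reaches every discrete
    metric on the carrier, and the zero function, which is not amenable,
    preserves every class of one-point spaces. *)

From Stdlib Require Import Reals Lra Classical ClassicalEpsilon FunctionalExtensionality.
Open Scope R_scope.

Definition discr {T : Type} (k : R) : T -> T -> R :=
  fun x y => if excluded_middle_informative (x = y) then 0 else k.

Lemma metric_refl {T : Type} (d : T -> T -> R) (x : T) :
  is_metric d -> d x x = 0.
Proof. intros [_ [Hsep _]]. now apply Hsep. Qed.

Lemma metric_pos {T : Type} (d : T -> T -> R) (x y : T) :
  is_metric d -> x <> y -> 0 < d x y.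
Proof.
  intros [Hnn [Hsep _]] Hxy.
  destruct (Req_dec_T (d x y) 0) as [E | E].
  - now apply Hsep in E.
  - pose proof (Hnn x y); lra.
Qed.

Lemma discr_is_discrete_metric (T : Type) (k : R) :
  0 < k -> is_discrete_metric (@discr T k).
Proof.
  intros Hk; unfold discr; split; [split; [|split; [|split]] |].
  - intros x y; destruct (excluded_middle_informative (x = y)); lra.
  - intros x y; destruct (excluded_middle_informative (x = y)); split;
      intros; auto; [lra | contradiction].
  - intros x y; destruct (excluded_middle_informative (x = y)),
      (excluded_middle_informative (y = x)); congruence.
  - intros x y z; destruct (excluded_middle_informative (x = z)),
      (excluded_middle_informative (x = y)),
      (excluded_middle_informative (y = z)); subst; try lra; congruence.
  - exists k; split; auto.
    intros x y Hxy; destruct (excluded_middle_informative (x = y)); tauto.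
Qed.

Lemma discr0_not_metric {T : Type} (x y : T) :
  x <> y -> ~ is_metric (@discr T 0).
Proof.
  intros Hxy [_ [Hsep _]]; apply Hxy, Hsep; unfold discr.
  now destruct (excluded_middle_informative (x = y)).
Qed.

Lemma discrete_metric_eq_discr {T : Type} (d : T -> T -> R) :
  is_discrete_metric d -> exists k, 0 < k /\ d = discr k.
Proof.
  intros [Hd [k [Hk Hconst]]]; exists k; split; auto.
  extensionality x; extensionality y; unfold discr.
  destruct (excluded_middle_informative (x = y)) as [<- | Hxy].
  - now apply metric_refl.
  - now apply Hconst.
Qed.

Lemma comp_discr {T : Type} (f : R -> R) (k : R) :
  f 0 = 0 -> (fun x y : T => f (discr k x y)) = discr (f k).
Proof.
  intros Hf0; extensionality x; extensionality y; unfold discr.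
  now destruct (excluded_middle_informative (x = y)).
Qed.

Lemma Dis_eq_discr (T : Type) (d : T -> T -> R) :
  Dis T d -> exists k, 0 < k /\ d = discr k.
Proof. intros [_ Hd]; now apply discrete_metric_eq_discr. Qed.

Lemma Dis_on_discr (T : Type) (k : R) :
  inhabited T -> 0 < k -> Dis_on T T (discr k).
Proof.
  intros HT Hk; exists eq_refl; split; auto; now apply discr_is_discrete_metric.
Qed.

Lemma Am0 (f : R -> R) : Am f -> f 0 = 0.
Proof. intros [_ Hker]; apply Hker; lra. Qed.

Lemma Am_pos (f : R -> R) (t : R) : Am f -> 0 < t -> 0 < f t.
Proof.
  intros [Hf Hker] Ht; destruct (Req_dec_T (f t) 0) as [E | E].
  - apply (Hker t) in E; lra.
  - pose proof (Hf t); lra.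
Qed.

Lemma Am_scale (c : R) : 0 < c -> Am (fun t => c * t).
Proof.
  intros Hc; split.
  - intros t Ht; apply Rmult_le_pos; lra.
  - intros t _; split; intros E; [| subst; ring].
    destruct (Rmult_integral _ _ E); auto; lra.
Qed.

Lemma comp_metric0 {T : Type} (f : R -> R) (d : T -> T -> R) (x : T) :
  is_metric d -> is_metric (fun a b => f (d a b)) -> f 0 = 0.
Proof.
  intros Hd Hfd; transitivity (f (d x x)).
  - now rewrite (metric_refl d x Hd).
  - exact (metric_refl _ x Hfd).
Qed.

(* The values [0 < 1 < 3] are chosen so that [3 <= u + v] with [u, v] in
   [{0, 1, 3}] forces [u = 3] or [v = 3]. *)
Definition spike (p t : R) : R :=
  if Req_dec_T t 0 then 0 else if Req_dec_T t p then 3 else 1.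

Lemma spike_Am (p : R) : Am (spike p).
Proof.
  unfold spike; split.
  - intros t _; destruct (Req_dec_T t 0); [lra |].
    destruct (Req_dec_T t p); lra.
  - intros t _; destruct (Req_dec_T t 0); split; intros; auto; try lra.
    destruct (Req_dec_T t p); lra.
Qed.

Lemma spike_triangle (p a b : R) :
  p <> 0 -> spike p p <= spike p a + spike p b -> p = a \/ p = b.
Proof.
  unfold spike; intros Hp.
  destruct (Req_dec_T p 0); [contradiction |].
  destruct (Req_dec_T p p); [| congruence].
  destruct (Req_dec_T a 0), (Req_dec_T a p), (Req_dec_T b 0), (Req_dec_T b p);
    auto; lra.
Qed.

Section IsoscelesMetric.

Variables (T : Type) (d : T -> T -> R).
Hypothesis Hd : is_metric d.
Hypothesis isosceles : forall x y z, x <> z -> d x z = d x y \/ d x z = d y z.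

Lemma isosceles_dist_from (x y z : T) : x <> y -> x <> z -> d x y = d x z.
Proof.
  destruct Hd as [_ [_ [Hsym _]]]; intros Hxy Hxz.
  destruct (classic (y = z)) as [<- | Hyz]; auto.
  destruct (isosceles x z y Hxy) as [| E1]; auto.
  destruct (isosceles x y z Hxz) as [E2 | E2]; auto.
  now rewrite E1, E2, Hsym.
Qed.

Lemma isosceles_metric_discrete : is_discrete_metric d.
Proof.
  split; auto.
  destruct (classic (exists x y : T, x <> y)) as [[x [y Hxy]] | Htriv].
  - exists (d x y); split; [now apply metric_pos |].
    intros u v Huv; destruct (classic (x = u)) as [<- | Hxu].
    + now apply isosceles_dist_from.
    + destruct Hd as [_ [_ [Hsym _]]].
      rewrite (isosceles_dist_from x y u Hxy Hxu), (Hsym x u).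
      now apply isosceles_dist_from.
  - exists 1; split; [lra |].
    intros u v Huv; exfalso; apply Htriv; eauto.
Qed.

End IsoscelesMetric.

Section DiscreteClass.

Variable X : MClass.
Hypothesis X_Dis : subclass X Dis.
Hypothesis X_Dis_on : forall (X1 : Type) (d1 : X1 -> X1 -> R),
  X X1 d1 -> subclass (Dis_on X1) X.

Lemma Am_preserves (f : R -> R) : Am f -> P X f.
Proof.
  intros HAm; split; [apply HAm |]; intros T d HT.
  destruct (X_Dis T d HT) as [Hinh _].
  destruct (Dis_eq_discr T d (X_Dis T d HT)) as [k [Hk ->]].
  rewrite (comp_discr f k (Am0 f HAm)).
  apply (X_Dis_on T _ HT), Dis_on_discr; auto.
  now apply Am_pos.
Qed.

Lemma preserves_Am (Y : Type) (y1 y2 : Y) (rho : Y -> Y -> R) (f : R -> R) :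
  X Y rho -> y1 <> y2 -> P X f -> Am f.
Proof.
  intros HY Hy [Hf Hpres]; split; auto.
  assert (Hf0 : f 0 = 0).
  { destruct (X_Dis Y rho HY) as [_ [Hrho _]].
    destruct (X_Dis _ _ (Hpres Y rho HY)) as [_ [Hfrho _]].
    exact (comp_metric0 f rho y1 Hrho Hfrho). }
  intros t Ht; split; intros E; [| now subst].
  destruct (Req_dec_T t 0) as [| Ht0]; auto; exfalso.
  assert (Hdt : X Y (discr t)).
  { apply (X_Dis_on Y rho HY), Dis_on_discr; [exact (inhabits y1) | lra]. }
  destruct (X_Dis _ _ (Hpres Y _ Hdt)) as [_ [Hmet _]].
  rewrite (comp_discr f t Hf0), E in Hmet.
  exact (discr0_not_metric y1 y2 Hy Hmet).
Qed.

End DiscreteClass.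

Section AmenablePreservers.

Variable X : MClass.
Hypothesis X_M : subclass X M.
Hypothesis Am_P : forall f, Am f -> P X f.
Hypothesis P_Am : forall f, P X f -> Am f.

Lemma preserved_metric (T : Type) (d : T -> T -> R) (f : R -> R) :
  X T d -> Am f -> is_metric (fun x y => f (d x y)).
Proof. intros HT HAm; apply (X_M T), (Am_P f HAm), HT. Qed.

Lemma amenable_preservers_Dis : subclass X Dis.
Proof.
  intros T d HT; destruct (X_M T d HT) as [Hinh Hd]; split; auto.
  apply isosceles_metric_discrete; auto.
  intros x y z Hxz.
  destruct (preserved_metric T d _ HT (spike_Am (d x z))) as [_ [_ [_ Htri]]].
  apply spike_triangle; [apply Rgt_not_eq, metric_pos; auto | exact (Htri x y z)].
Qed.

Lemma amenable_preservers_nontrivial :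
  exists (Y : Type) (rho : Y -> Y -> R), X Y rho /\ exists y1 y2 : Y, y1 <> y2.
Proof.
  apply NNPP; intros Htriv.
  assert (Hzero : ~ Am (fun _ => 0)).
  { intros [_ Hker].
    assert (H10 : 1 = 0) by (apply (proj1 (Hker 1 ltac:(lra))); reflexivity).
    lra. }
  apply Hzero, P_Am; split; [intros t _; apply Rle_refl |].
  intros T d HT; replace (fun _ _ : T => 0) with d; auto.
  extensionality x; extensionality y.
  destruct (X_M T d HT) as [_ [_ [Hsep _]]]; apply Hsep.
  apply NNPP; intros Hxy; apply Htriv.
  exists T, d; split; [exact HT | now exists x, y].
Qed.

(* Any two discrete metrics on the same carrier differ by a positive factor. *)
Lemma amenable_preservers_Dis_on (X1 : Type) (d1 : X1 -> X1 -> R) :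
  X X1 d1 -> subclass (Dis_on X1) X.
Proof.
  intros H1 T d [e [_ Hd]]; subst T.
  destruct (Dis_eq_discr X1 d1 (amenable_preservers_Dis X1 d1 H1)) as [k1 [Hk1 ->]].
  destruct (discrete_metric_eq_discr d Hd) as [k [Hk ->]].
  assert (Hc : 0 < k / k1) by (apply Rdiv_lt_0_compat; auto).
  replace (discr k) with (fun x y : X1 => k / k1 * discr k1 x y).
  - exact (proj2 (Am_P _ (Am_scale _ Hc)) X1 _ H1).
  - rewrite (comp_discr (fun t => k / k1 * t)); [| ring].
    f_equal; field; lra.
Qed.

End AmenablePreservers.

Theorem mainTheorem4 (X : MClass) (HX : subclass X M) :
  (subclass X Dis /\
   (exists (Y : Type) (rho : Y -> Y -> R), X Y rho /\ exists y1 y2 : Y, y1 <> y2) /\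
   (forall (X1 : Type) (d1 : X1 -> X1 -> R), X X1 d1 -> subclass (Dis_on X1) X))
  <->
  (forall f : R -> R, inF f -> (P X f <-> Am f)).
Proof.
  split.
  - intros [HDis [[Y [rho [HY [y1 [y2 Hy]]]]] HDis_on]] f _; split.
    + exact (preserves_Am X HDis HDis_on Y y1 y2 rho f HY Hy).
    + exact (Am_preserves X HDis HDis_on f).
  - intros HPAm.
    assert (Am_P : forall f, Am f -> P X f) by (intros f Hf; apply HPAm; auto; apply Hf).
    assert (P_Am : forall f, P X f -> Am f) by (intros f Hf; apply HPAm; auto; apply Hf).
    split; [| split].
    + exact (amenable_preservers_Dis X HX Am_P).
    + exact (amenable_preservers_nontrivial X HX P_Am).
    + exact (amenable_preservers_Dis_on X HX Am_P).
Qed.
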